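(* Let $G$ be a finite, simple, connected graph. Then $res_{wt}(G)=3$ if and only if $G$ is a cycle of odd order or $G$ is a path of order at least three.
   Context: $d(x,y)$ is the shortest-path distance. A set $W\subseteq V(G)$ is a resolving set if for every two distinct vertices $y,z$ there is $x\in W$ with $d(y,x)\ne d(z,x)$. A set $W$ is a weak total resolving set (WTR-set) if $W$ is resolving and, for every $w\in W$ and every $x\in V(G)\setminus W$, there is $w'\in W\setminus\{w\}$ with $d(x,w')\ne d(w,w')$. The weak total resolving number $res_{wt}(G)$ is the minimum positive integer $r$ such that every set of $r$ vertices of $G$ is a WTR-set for $G$. *)

From mathcomp Require Import all_boot.
Set Implicit Arguments. Unset Strict Implicit. Unset Printing Implicit Defensive.

Definition simple_graph (T : finType) (e : rel T) : Prop :=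
  symmetric e /\ irreflexive e.

Definition connected_graph (T : finType) (e : rel T) : Prop :=
  forall x y : T, connect e x y.

Definition walk_of_len (T : finType) (e : rel T) (k : nat) (x y : T) : bool :=
  [exists p : k.-tuple T, path e x p && (last x p == y)].

(* shortest-path distance: least k < #|T| admitting a walk of length k
   (in a connected graph such k always exists, and a shortest walk is a path) *)
Definition dist (T : finType) (e : rel T) (x y : T) : nat :=
  find (fun k => walk_of_len e k x y) (iota 0 #|T|).

Definition resolving (T : finType) (e : rel T) (W : {set T}) : Prop :=
  forall y z : T, y != z -> exists2 x, x \in W & dist e y x != dist e z x.

Definition wtr_set (T : finType) (e : rel T) (W : {set T}) : Prop :=
  resolving e W /\
  forall w x, w \in W -> x \notin W ->
    exists2 w', w' \in W :\ w & dist e x w' != dist e w w'.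

Definition all_r_sets_wtr (T : finType) (e : rel T) (r : nat) : Prop :=
  forall W : {set T}, #|W| = r -> wtr_set e W.

Definition res_wt_is (T : finType) (e : rel T) (r : nat) : Prop :=
  0 < r /\ all_r_sets_wtr e r /\
  forall r', 0 < r' < r -> ~ all_r_sets_wtr e r'.

Definition is_cycle_graph (T : finType) (e : rel T) (n : nat) : Prop :=
  3 <= n /\ exists f : 'I_n -> T, bijective f /\
    forall i j : 'I_n, e (f i) (f j) = ((j == (i + 1) %% n :> nat) || (i == (j + 1) %% n :> nat)).

Definition is_path_graph (T : finType) (e : rel T) (n : nat) : Prop :=
  exists f : 'I_n -> T, bijective f /\
    forall i j : 'I_n, e (f i) (f j) = ((j == i.+1 :> nat) || (i == j.+1 :> nat)).

(* A 3-set {w, a, b} is a WTR-set iff for every y outside it, {a, b} resolves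
   y and w (and symmetrically), so every 3-set is WTR iff any two distinct
   vertices resolve any two distinct vertices.  Then no vertex has three
   neighbours: they are pairwise at distance 1 or 2, hence cannot all be told
   apart by the pairs they form with the centre.  A connected graph of maximum
   degree 2 is spanned by a non-extendable path, started at a leaf if there is
   one (a path graph), otherwise anywhere, and then its ends are adjacent (a
   cycle).  Conversely two vertices resolve everything on a path and on an odd
   cycle, whereas on an even cycle 0 and n/2 do not separate 1 from n - 1.
   Minimality: a single vertex is never WTR, and {a, v} with v adjacent to a
   and b fails at w = a, x = b. *)

From mathcomp Require Import all_boot zify.
Set Implicit Arguments. Unset Strict Implicit. Unset Printing Implicit Defensive.

Section Distance.
Variables (T : finType) (e : rel T).

Lemma walkP k x y :
  reflect (exists s, [/\ size s = k, path e x s & last x s = y]) (walk_of_len e k x y).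
Proof.
apply: (iffP existsP) => [[s /andP[es /eqP ly]] | [s [sk es ly]]].
  by exists (val s); rewrite size_tuple.
have sk' : size s == k by apply/eqP.
by exists (Tuple sk'); rewrite /= es ly eqxx.
Qed.

Lemma dist_spec k x y : walk_of_len e k x y -> k < #|T| ->
  dist e x y <= k /\ walk_of_len e (dist e x y) x y.
Proof.
move=> w kT; have has_w : has (fun j => walk_of_len e j x y) (iota 0 #|T|).
  by apply/hasP; exists k; rewrite ?mem_iota.
split; last by have := nth_find 0 has_w; rewrite nth_iota // -[X in _ < X](size_iota 0) -has_find.
by rewrite leqNgt; apply/negP => /(before_find 0); rewrite nth_iota // w.
Qed.

Lemma dist_char k x y : walk_of_len e k x y -> k < #|T| ->
  (forall j, j < k -> ~~ walk_of_len e j x y) -> dist e x y = k.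
Proof.
move=> w kT shorter; have [le_dk wd] := dist_spec w kT.
by apply/eqP; rewrite eqn_leq le_dk leqNgt; apply: contraL wd => /shorter.
Qed.

Lemma size_uniq_le_card (s : seq T) : uniq s -> size s <= #|T|.
Proof. by move/card_uniqP <-; apply: max_card. Qed.

Lemma connect_walk x y : connect e x y -> exists2 k, k < #|T| & walk_of_len e k x y.
Proof.
case/connectP => p ep ->; have [p' ep' up' _] := shortenP ep.
exists (size p'); last by apply/walkP; exists p'.
exact: size_uniq_le_card up'.
Qed.

Lemma dist0 x : dist e x x = 0.
Proof.
apply: dist_char => //; last by apply/card_gt0P; exists x.
by apply/walkP; exists [::].
Qed.

Lemma dist_potential y (D : T -> nat) :
  (forall x z, e x z -> D x <= D z + 1) ->
  (forall x, D x = 0 -> x = y) -> D y = 0 ->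
  (forall x k, D x = k.+1 -> exists2 z, e x z & D z = k) ->
  (forall x, D x < #|T|) -> forall x, dist e x y = D x.
Proof.
move=> D_lip D0 Dy D_desc D_lt x.
have D_le s u : path e u s -> last u s = y -> D u <= size s.
  elim: s u => [|z s IH] u /=; first by move=> _ ->; rewrite Dy.
  by case/andP=> euz ezs ly; have := IH _ ezs ly; have := D_lip _ _ euz; lia.
have D_walk k u : D u = k -> walk_of_len e k u y.
  elim: k u => [|k IH] u Du; first by apply/walkP; exists [::]; rewrite (D0 _ Du).
  have [z euz Dz] := D_desc _ _ Du; have /walkP[s [sk es ly]] := IH _ Dz.
  by apply/walkP; exists (z :: s); rewrite /= euz es sk.
apply: dist_char (D_walk _ _ erefl) (D_lt x) _ => j jD.
by apply/negP => /walkP[s [sj es ly]]; have := D_le _ _ es ly; lia.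
Qed.

Hypotheses (esym : symmetric e) (eirr : irreflexive e) (conn : connected_graph e).

Lemma walk_of_lenC k x y : walk_of_len e k x y -> walk_of_len e k y x.
Proof.
case/walkP=> s [sk es <-]; apply/walkP; exists (rev (belast x s)); split.
- by rewrite size_rev size_belast.
- by rewrite rev_path (eq_path (e' := e)) // => u v; rewrite /= esym.
- by rewrite -(last_cons x) -rev_rcons -lastI rev_cons last_rcons.
Qed.

Lemma distC x y : dist e x y = dist e y x.
Proof. by apply: eq_find => k; apply/idP/idP; apply: walk_of_lenC. Qed.

Lemma dist_eq0 x y : (dist e x y == 0) = (x == y).
Proof.
apply/eqP/eqP => [d0 | ->]; last exact: dist0.
have [k kT w] := connect_walk (conn x y); have [_] := dist_spec w kT.
by rewrite d0 => /walkP[s [/size0nil -> _ <-]].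
Qed.

Lemma dist1 x y : e x y -> dist e x y = 1.
Proof.
move=> exy; have nxy : x != y by apply: contraTneq exy => ->; rewrite eirr.
apply: dist_char => [||[|//] _].
- by apply/walkP; exists [:: y]; rewrite /= exy.
- by apply: (size_uniq_le_card (s := [:: x; y])); rewrite /= inE nxy.
- by apply/negP => /walkP[s [/size0nil -> _ /= yx]]; rewrite yx eqxx in nxy.
Qed.

Lemma dist_common_nbr v a b : a != b -> e v a -> e v b -> 0 < dist e a b <= 2.
Proof.
move=> nab eva evb.
have nav : a != v by apply: contraTneq eva => ->; rewrite eirr.
have nbv : b != v by apply: contraTneq evb => ->; rewrite eirr.
have w2 : walk_of_len e 2 a b by apply/walkP; exists [:: v; b]; rewrite /= esym eva evb.
have T3 : 2 < #|T|.
  by apply: (size_uniq_le_card (s := [:: a; b; v])); rewrite /= !inE negb_or nab nav nbv.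
by rewrite lt0n dist_eq0 nab; have [] := dist_spec w2 T3.
Qed.

End Distance.

Definition pair_resolving (T : finType) (e : rel T) :=
  forall a b y z : T, a != b -> y != z ->
  (dist e y a != dist e z a) || (dist e y b != dist e z b).

Definition degree_le2 (T : finType) (e : rel T) :=
  forall v a b c : T, e v a -> e v b -> e v c -> [|| a == b, a == c | b == c].

Definition has_two_nbrs (T : finType) (e : rel T) (v : T) :=
  exists a b, [/\ a != b, e v a & e v b].

Section WeakTotalResolving.
Variables (T : finType) (e : rel T).
Hypotheses (esym : symmetric e) (eirr : irreflexive e) (conn : connected_graph e).

Lemma all_r_sets_wtr_ge_card r : #|T| <= r -> all_r_sets_wtr e r.
Proof.
move=> Tr W Wr; have -> : W = setT.
  by apply/eqP; rewrite eqEcard subsetT cardsT Wr.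
split=> [y z nyz | w x _]; last by rewrite inE.
by exists y; rewrite ?inE // dist0 eq_sym (dist_eq0 conn) eq_sym.
Qed.

Lemma not_all_1_sets_wtr : 1 < #|T| -> ~ all_r_sets_wtr e 1.
Proof.
case/card_gt1P => w [x [_ _ nwx]] all1.
have [_ wtr] := all1 [set w] (cards1 w).
have := wtr w x (set11 w); rewrite inE eq_sym nwx => /(_ isT)[w'].
by rewrite !inE andNb.
Qed.

Lemma not_all_2_sets_wtr v : has_two_nbrs e v -> ~ all_r_sets_wtr e 2.
Proof.
move=> [a [b [nab eva evb]]] all2.
have nav : a != v by apply: contraTneq eva => ->; rewrite eirr.
have nbv : b != v by apply: contraTneq evb => ->; rewrite eirr.
have [|_ wtr] := all2 [set a; v]; first by rewrite cards2 nav.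
have := wtr a b; rewrite !inE eqxx negb_or (eq_sym b) nab nbv => /(_ isT isT)[w'].
rewrite !inE => /andP[nw'a /orP[/eqP w'a | /eqP ->]]; first by rewrite w'a eqxx in nw'a.
by rewrite !dist1 // esym.
Qed.

Lemma all_3_sets_wtrP : all_r_sets_wtr e 3 <-> pair_resolving e.
Proof.
split=> [all3 a b y z nab nyz | res W W3].
  have d0 u v : u != v -> dist e u u != dist e v u.
    by move=> nuv; rewrite dist0 eq_sym (dist_eq0 conn) eq_sym.
  case: (eqVneq y a) nyz => [-> nyz | nya nyz]; first by rewrite d0.
  case: (eqVneq z a) nyz => [-> nyz | nza nyz]; first by rewrite eq_sym d0 // eq_sym.
  case: (eqVneq y b) nyz => [-> nyz | nyb nyz]; first by rewrite d0 ?orbT.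
  case: (eqVneq z b) nyz => [-> nyz | nzb nyz]; first by rewrite orbC eq_sym d0 // eq_sym.
  have [|_ wtr] := all3 [set z; a; b].
    by rewrite -setUA cardsU1 cards2 !inE negb_or nza nzb nab.
  have := wtr z y; rewrite !inE eqxx !negb_or nyz nya nyb => /(_ isT isT)[w'].
  rewrite !inE => /andP[nw'z /orP[/orP[/eqP w'z | /eqP ->] | /eqP ->]] d.
  - by rewrite w'z eqxx in nw'z.
  - by rewrite d.
  - by rewrite d orbT.
split=> [y z nyz | w x wW xW].
  have /card_gt1P[a [b [aW bW nab]]] : 1 < #|W| by rewrite W3.
  by case/orP: (res a b y z nab nyz) => d; [exists a | exists b].
have /card_gt1P[a [b [aW bW nab]]] : 1 < #|W :\ w|.
  by move: W3; rewrite (cardsD1 w) wW add1n => -[->].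
have nxw : x != w by apply: contraNneq xW => ->.
by case/orP: (res a b x w nab nxw) => d; [exists a | exists b].
Qed.

Lemma pair_resolving_degree_le2 : pair_resolving e -> degree_le2 e.
Proof.
move=> res v a b c eva evb evc.
case: (eqVneq a b) => // nab; case: (eqVneq a c) => // nac; case: (eqVneq b c) => //= nbc.
have nva : v != a by apply: contraTneq eva => ->; rewrite eirr.
have nvb : v != b by apply: contraTneq evb => ->; rewrite eirr.
have nvc : v != c by apply: contraTneq evc => ->; rewrite eirr.
have vdist u : e v u -> dist e u v = 1 by move=> evu; rewrite (distC esym) dist1.
have := res v a b c nva nbc; have := res v b a c nvb nac; have := res v c a b nvc nab.
rewrite !vdist // !eqxx /= (distC esym b a) (distC esym c a) (distC esym c b).
have := dist_common_nbr esym eirr conn nab eva evb.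
have := dist_common_nbr esym eirr conn nac eva evc.
have := dist_common_nbr esym eirr conn nbc evb evc.
by move=> /andP[? ?] /andP[? ?] /andP[? ?]; rewrite !neq_ltn; lia.
Qed.

End WeakTotalResolving.

Definition natdist (i j : nat) := (i - j) + (j - i).

Definition cdist (n i j : nat) := minn (natdist i j) (n - natdist i j).

Lemma modn_succ n i : i < n -> (i + 1) %% n = if i.+1 == n then 0 else i.+1.
Proof.
move=> lt_in; case: eqP => [<- | ?]; first by rewrite addn1 modnn.
by rewrite modn_small; lia.
Qed.

Lemma modn_pred n i : i < n -> (i + n.-1) %% n = if i == 0 then n.-1 else i.-1.
Proof.
move=> lt_in; case: eqP => [-> | ?]; first by rewrite add0n modn_small; lia.
have -> : i + n.-1 = i.-1 + n by lia.
by rewrite modnDr modn_small; lia.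
Qed.

Lemma cdistE n i j : j <= i -> cdist n i j = minn (i - j) (n - (i - j)).
Proof. by move=> ?; rewrite /cdist /natdist; congr minn; lia. Qed.

Lemma cdistEr n i j : i <= j -> cdist n i j = minn (j - i) (n - (j - i)).
Proof. by move=> ?; rewrite /cdist /natdist; congr minn; lia. Qed.

Lemma cdist_step n x j k : x < n -> j < n -> cdist n x j = k.+1 ->
  cdist n (if x.+1 == n then 0 else x.+1) j = k \/
  cdist n (if x == 0 then n.-1 else x.-1) j = k.
Proof.
move=> lt_xn lt_jn; case: (ltngtP x j) => [lt_xj | lt_jx | ->].
- rewrite (@cdistEr n x j (ltnW lt_xj)) => dk; case: (leqP (2 * (j - x)) n) => short.
  + by left; rewrite ifF; [rewrite cdistEr; lia | apply/eqP; lia].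
  + by right; case: eqP => ?; [rewrite cdistE | rewrite cdistEr]; lia.
- rewrite (@cdistE n x j (ltnW lt_jx)) => dk; case: (leqP (2 * (x - j)) n) => short.
  + by right; rewrite ifF; [rewrite cdistE; lia | apply/eqP; lia].
  + by left; case: eqP => ?; [rewrite cdistEr | rewrite cdistE]; lia.
- by rewrite /cdist /natdist subnn; lia.
Qed.

Lemma cdist_eq n p q i : p < n -> q < n -> i < n -> cdist n p i = cdist n q i ->
  p = q \/ p + q = 2 * i \/ p + q = 2 * i + n \/ p + q + n = 2 * i.
Proof.
move=> lt_pn lt_qn lt_in.
case: (leqP i p) => ip; [rewrite (@cdistE n p i ip) | rewrite (@cdistEr n p i (ltnW ip))];
case: (leqP i q) => iq; rewrite ?(@cdistE n q i iq) ?(@cdistEr n q i (ltnW iq)); lia.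
Qed.

Lemma natdist_resolving i j p q : i != j -> p != q ->
  (natdist p i != natdist q i) || (natdist p j != natdist q j).
Proof.
move=> /eqP nij /eqP npq; rewrite /natdist.
by case: eqP => ? //=; case: eqP => ? //; lia.
Qed.

(* In an odd cycle, two vertices equidistant from both i and j would be mirror
   images across two different axes, which forces them to coincide. *)
Lemma cdist_resolving_odd n i j p q : odd n -> i < n -> j < n -> p < n -> q < n ->
  i != j -> p != q -> (cdist n p i != cdist n q i) || (cdist n p j != cdist n q j).
Proof.
move=> odd_n lt_in lt_jn lt_pn lt_qn /eqP nij /eqP npq.
have := odd_double_half n; rewrite odd_n /= => n_half.
case: eqP => [/cdist_eq eq_i | //]; case: eqP => [/cdist_eq eq_j | _]; last by rewrite orbT.
by have := eq_i lt_pn lt_qn lt_in; have := eq_j lt_pn lt_qn lt_jn; lia.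
Qed.

Lemma cdist_even n : 3 <= n -> ~~ odd n ->
  cdist n 1 0 = cdist n n.-1 0 /\ cdist n 1 n./2 = cdist n n.-1 n./2.
Proof.
move=> n3 even_n; have := odd_double_half n; rewrite (negbTE even_n) add0n => n_half.
by rewrite /cdist /natdist; split; lia.
Qed.

Section GraphModels.
Variables (T : finType) (e : rel T).

Lemma path_graph_dist n (f : 'I_n -> T) : bijective f ->
  (forall i j : 'I_n, e (f i) (f j) = (j == i.+1 :> nat) || (i == j.+1 :> nat)) ->
  forall i j : 'I_n, dist e (f i) (f j) = natdist i j.
Proof.
move=> f_bij ef i j; have := bij_eq_card f_bij; rewrite card_ord => nT.
case: f_bij => g fK gK; have -> : natdist i j = natdist (g (f i)) j by rewrite fK.
apply: (dist_potential (D := fun x => natdist (g x) j)); rewrite /natdist.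
- by move=> x z; rewrite -{1}(gK x) -{1}(gK z) ef; lia.
- by move=> x dx; rewrite -(gK x); congr f; apply: val_inj => /=; lia.
- by rewrite fK; lia.
- move=> x k dx; case: (ltnP (g x) j) => gxj.
  + have lt_n : (g x).+1 < n by have := ltn_ord j; lia.
    exists (f (Ordinal lt_n)); last by rewrite fK /=; lia.
    by rewrite -{1}(gK x) ef /= eqxx.
  + have lt_n : (g x).-1 < n by have := ltn_ord (g x); lia.
    exists (f (Ordinal lt_n)); last by rewrite fK /=; lia.
    by rewrite -{1}(gK x) ef /=; lia.
- by move=> x; rewrite -nT; have := ltn_ord (g x); have := ltn_ord j; lia.
Qed.

Lemma cycle_graph_dist n (f : 'I_n -> T) : bijective f ->
  (forall i j : 'I_n, e (f i) (f j) = (j == (i + 1) %% n :> nat) || (i == (j + 1) %% n :> nat)) ->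
  forall i j : 'I_n, dist e (f i) (f j) = cdist n i j.
Proof.
move=> f_bij ef i j; have := bij_eq_card f_bij; rewrite card_ord => nT.
case: f_bij => g fK gK; have -> : cdist n i j = cdist n (g (f i)) j by rewrite fK.
have n_gt0 : 0 < n by case: (n) i => [[]|].
apply: (dist_potential (D := fun x => cdist n (g x) j)).
- move=> x z; rewrite -{1}(gK x) -{1}(gK z) ef !modn_succ // /cdist /natdist.
  have := ltn_ord (g x); have := ltn_ord (g z); have := ltn_ord j.
  by case: ((g x).+1 =P n); case: ((g z).+1 =P n); lia.
- move=> x dx; rewrite -(gK x); congr f; apply: val_inj; move: dx => /=.
  by rewrite /cdist /natdist; have := ltn_ord (g x); have := ltn_ord j; lia.
- by rewrite fK /cdist /natdist subnn; lia.
- move=> x k dx.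
  have lt_succ : (g x + 1) %% n < n by rewrite ltn_pmod.
  have lt_pred : (g x + n.-1) %% n < n by rewrite ltn_pmod.
  have e_succ : e x (f (Ordinal lt_succ)) by rewrite -{1}(gK x) ef /= eqxx.
  have e_pred : e x (f (Ordinal lt_pred)).
    rewrite -{1}(gK x) ef /= modn_pred //; apply/orP; right.
    case: (g x =P 0 :> nat) => [-> | gx0]; first by rewrite addn1 prednK // modnn.
    by rewrite addn1 prednK ?modn_small //; lia.
  have := cdist_step (ltn_ord (g x)) (ltn_ord j) dx.
  rewrite -modn_succ // -modn_pred //.
  by case=> dk; [exists (f (Ordinal lt_succ)) | exists (f (Ordinal lt_pred))]; rewrite ?fK.
- by move=> x; rewrite -nT /cdist; have := ltn_ord (g x); lia.
Qed.

Lemma path_graph_pair_resolving n : is_path_graph e n -> pair_resolving e.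
Proof.
case=> f [f_bij ef] a b y z; have d := path_graph_dist f_bij ef.
case: f_bij => g fK gK; rewrite -(gK a) -(gK b) -(gK y) -(gK z) !d !(can_eq fK) => nab nyz.
by apply: natdist_resolving; rewrite (inj_eq val_inj).
Qed.

Lemma odd_cycle_pair_resolving n : odd n -> is_cycle_graph e n -> pair_resolving e.
Proof.
move=> odd_n [_ [f [f_bij ef]]] a b y z; have d := cycle_graph_dist f_bij ef.
case: f_bij => g fK gK; rewrite -(gK a) -(gK b) -(gK y) -(gK z) !d !(can_eq fK) => nab nyz.
by apply: cdist_resolving_odd; rewrite ?(inj_eq val_inj).
Qed.

Lemma even_cycle_not_pair_resolving n : ~~ odd n -> is_cycle_graph e n -> ~ pair_resolving e.
Proof.
move=> even_n [n3 [f [f_bij ef]]] res; have d := cycle_graph_dist f_bij ef.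
have f_inj := bij_inj f_bij.
have lt0 : 0 < n by lia.
have lt1 : 1 < n by lia.
have lt_half : n./2 < n by lia.
have lt_last : n.-1 < n by lia.
have n0h : f (Ordinal lt0) != f (Ordinal lt_half).
  by rewrite (inj_eq f_inj) -(inj_eq val_inj) /=; lia.
have n1l : f (Ordinal lt1) != f (Ordinal lt_last).
  by rewrite (inj_eq f_inj) -(inj_eq val_inj) /=; lia.
have [c0 ch] := cdist_even n3 even_n.
by have := res _ _ _ _ n0h n1l; rewrite !d /= c0 ch !eqxx.
Qed.

Lemma path_graph_has_two_nbrs n : 2 < n -> is_path_graph e n -> exists v, has_two_nbrs e v.
Proof.
move=> n3 [f [f_bij ef]].
have n1 : 1 < n by apply: ltnW.
have n0 : 0 < n by apply: ltnW.
exists (f (Ordinal n1)), (f (Ordinal n0)), (f (Ordinal n3)).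
by rewrite (inj_eq (bij_inj f_bij)) !ef.
Qed.

Lemma cycle_graph_has_two_nbrs n : is_cycle_graph e n -> exists v, has_two_nbrs e v.
Proof.
move=> [n3 [f [f_bij ef]]].
have n1 : 1 < n by apply: ltnW.
have n0 : 0 < n by apply: ltnW.
exists (f (Ordinal n1)), (f (Ordinal n0)), (f (Ordinal n3)).
by rewrite (inj_eq (bij_inj f_bij)) !ef /= (modn_small n1) (modn_small n3) eqxx orbT.
Qed.
End GraphModels.

Lemma maximal_path_from (T : finType) (e : rel T) (s : T) :
  exists p, [/\ path e s p, uniq (s :: p) & forall v, e (last s p) v -> v \in s :: p].
Proof.
pose P k := [exists p : k.-tuple T, path e s p && uniq (s :: p)].
have P0 : P 0 by apply/existsP; exists [tuple].
have P_bound k : P k -> k <= #|T|.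
  by case/existsP=> p /andP[_ /size_uniq_le_card]; rewrite /= size_tuple; apply: ltnW.
case: (ex_maxnP (ex_intro P 0 P0) P_bound) => K /existsP[p /andP[ep up]] K_max.
exists p; split=> // v ev; apply: contraT => vp.
suff /K_max : P K.+1 by rewrite ltnn.
apply/existsP; exists [tuple of rcons p v]; rewrite [tval _]/=.
by rewrite rcons_path ep ev -rcons_cons rcons_uniq vp up.
Qed.

Section MaximalPath.
Variables (T : finType) (e : rel T).
Hypotheses (esym : symmetric e) (eirr : irreflexive e) (conn : connected_graph e).
Hypothesis deg2 : degree_le2 e.
Variables (s : T) (p : seq T).
Hypotheses (s_p : path e s p) (s_p_uniq : uniq (s :: p)).
Hypothesis p_maximal : forall v, e (last s p) v -> v \in s :: p.

Local Notation x i := (nth s (s :: p) i).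

Lemma maxpath_nth_inj i j : x i = x j -> i <= size p -> j <= size p -> i = j.
Proof. by move=> /eqP xij ip jp; apply/eqP; rewrite -(nth_uniq s _ _ s_p_uniq). Qed.

Lemma maxpath_nth_edge i : i < size p -> e (x i) (x i.+1).
Proof. by move: s_p => /(pathP s); apply. Qed.

Lemma maxpath_index v : v \in s :: p -> exists2 i, i <= size p & v = x i.
Proof. by move=> vq; exists (index v (s :: p)); rewrite ?nth_index // -ltnS index_mem. Qed.

Lemma maxpath_inner_nbr i v : 0 < i -> i < size p -> e (x i) v -> v = x i.-1 \/ v = x i.+1.
Proof.
move=> i_gt0 i_lt eiv.
have e_prev : e (x i) (x i.-1).
  by rewrite esym; have := maxpath_nth_edge (_ : i.-1 < size p); rewrite prednK //; apply; lia.
have neq : x i.-1 != x i.+1 by apply/eqP => /maxpath_nth_inj; lia.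
case/or3P: (deg2 e_prev (maxpath_nth_edge i_lt) eiv) => /eqP h.
- by rewrite h eqxx in neq.
- by left; rewrite h.
- by right; rewrite h.
Qed.

Lemma maxpath_edge_lt i j : i < j -> j <= size p -> e (x i) (x j) ->
  j = i.+1 \/ i = 0 /\ j = size p.
Proof.
move=> ij jp eij; case: (posnP i) => [i0 | i_gt0].
  case: (ltnP j (size p)) => [j_lt | j_ge]; last by right; lia.
  rewrite esym in eij; have j_gt0 : 0 < j by lia.
  by case: (maxpath_inner_nbr j_gt0 j_lt eij) => /maxpath_nth_inj; lia.
have i_lt : i < size p by lia.
by case: (maxpath_inner_nbr i_gt0 i_lt eij) => /maxpath_nth_inj; lia.
Qed.

Lemma maxpath_edgeE i j : i <= size p -> j <= size p ->
  e (x i) (x j) <-> j = i.+1 \/ i = j.+1 \/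
    e s (x (size p)) /\ (i = 0 /\ j = size p \/ j = 0 /\ i = size p).
Proof.
move=> ip jp; split=> [eij | [ji | [ij | [es_last [[-> ->] | [-> ->]]]]]].
- case: (ltngtP i j) => [ij | ji | ij]; last by move: eij; rewrite ij eirr.
  + case: (maxpath_edge_lt ij jp eij) => [-> | [i0 j_last]]; first by left.
    by do 2 right; split; [move: eij; rewrite i0 j_last | left].
  + rewrite esym in eij.
    case: (maxpath_edge_lt ji ip eij) => [-> | [j0 i_last]]; first by right; left.
    by do 2 right; split; [move: eij; rewrite j0 i_last | right].
- by subst j; apply: maxpath_nth_edge.
- by subst i; rewrite esym; apply: maxpath_nth_edge.
- exact: es_last.
- by rewrite esym.
Qed.

Lemma maxpath_spanning : (forall v, e s v -> v \in s :: p) -> (size p).+1 = #|T|.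
Proof.
move=> s_nbrs.
have q_closed u v : e u v -> u \in s :: p -> v \in s :: p.
  move=> euv /maxpath_index[i ip xi]; rewrite {}xi in euv.
  case: (posnP i) => [i0 | i_gt0]; first by apply: s_nbrs; rewrite i0 in euv.
  case: (ltnP i (size p)) => [i_lt | i_ge].
    by case: (maxpath_inner_nbr i_gt0 i_lt euv) => ->; apply: mem_nth => /=; lia.
  by apply: p_maximal; rewrite (last_nth s); have <- : i = size p by lia.
have q_all v : v \in s :: p.
  by rewrite -(closed_connect (intro_closed (sym_connect_sym esym) q_closed) (conn s v)) mem_head.
apply/eqP; rewrite eqn_leq -[(size p).+1]/(size (s :: p)) size_uniq_le_card //.
by rewrite -(card_uniqP s_p_uniq); apply/subset_leq_card/subsetP => v _; apply: q_all.
Qed.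

Lemma maxpath_bijective : (size p).+1 = #|T| -> bijective (fun i : 'I_#|T| => x i).
Proof.
move=> sizeT; apply: inj_card_bij; last by rewrite card_ord.
by move=> i j /maxpath_nth_inj eq_ij; apply/val_inj/eq_ij; rewrite -ltnS sizeT.
Qed.

Lemma maximal_path_is_path_graph :
  (forall v w, e s v -> e s w -> v = w) -> 2 < #|T| -> is_path_graph e #|T|.
Proof.
move=> s_leaf T3.
have s_nbrs v : e s v -> v \in s :: p.
  move=> esv; case: (posnP (size p)) => [/size0nil p0 | p_gt0].
    by move: esv (@p_maximal v); rewrite p0 inE => esv /(_ esv) /eqP vs; rewrite vs eirr in esv.
  by rewrite (s_leaf _ _ esv (maxpath_nth_edge p_gt0)) mem_nth.
have sizeT := maxpath_spanning s_nbrs.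
have no_wrap : ~~ e s (x (size p)).
  apply/negP => es_last; have p_gt0 : 0 < size p by lia.
  by move: (s_leaf _ _ (maxpath_nth_edge p_gt0) es_last) => /maxpath_nth_inj; lia.
exists (fun i : 'I_#|T| => x i); split; first exact: maxpath_bijective.
move=> i j; have ip : i <= size p by rewrite -ltnS sizeT.
have jp : j <= size p by rewrite -ltnS sizeT.
apply/idP/idP => [/(maxpath_edgeE ip jp) | /orP[] /eqP eq_ij]; last 2 first.
- by apply/(maxpath_edgeE ip jp); left.
- by apply/(maxpath_edgeE ip jp); right; left.
- case=> [-> | [-> | [es_last _]]]; [by rewrite eqxx | by rewrite eqxx orbT |].
  by rewrite es_last in no_wrap.
Qed.

Lemma maximal_path_is_cycle_graph :
  (forall v, has_two_nbrs e v) -> 2 < #|T| -> is_cycle_graph e #|T|.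
Proof.
move=> two_nbrs T3.
have [k [k_lt ek]] : exists k, k.+1 < size p /\ e (x k) (x (size p)).
  have [a [b [nab ea eb]]] := two_nbrs (last s p).
  have [i ip ai] := maxpath_index (p_maximal ea); have [j jp bj] := maxpath_index (p_maximal eb).
  rewrite (last_nth s) {}ai {}bj in ea eb nab.
  have ni : i != size p by apply: contraTneq ea => ->; rewrite eirr.
  have nj : j != size p by apply: contraTneq eb => ->; rewrite eirr.
  case: (ltnP i.+1 (size p)) => [i_lt | i_ge]; first by exists i; rewrite esym.
  case: (ltnP j.+1 (size p)) => [j_lt | j_ge]; first by exists j; rewrite esym.
  have ij : i = j by lia.
  by rewrite ij eqxx in nab.
have wrap : e s (x (size p)).
  have k_lt' : k < size p by lia.
  by case: (maxpath_edge_lt k_lt' (leqnn _) ek) => [| [k0 _]]; [lia | rewrite k0 in ek].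
have s_nbrs v : e s v -> v \in s :: p.
  move=> esv; have p_gt0 : 0 < size p by lia.
  case/or3P: (deg2 (maxpath_nth_edge p_gt0) wrap esv) => /eqP h.
  - by move: h => /maxpath_nth_inj; lia.
  - by rewrite -h mem_nth.
  - by rewrite -h mem_nth.
have sizeT := maxpath_spanning s_nbrs.
have edgeE i j : i <= size p -> j <= size p -> e (x i) (x j) <->
    j = i.+1 \/ i = j.+1 \/ i = 0 /\ j = size p \/ j = 0 /\ i = size p.
  by move=> ip jp; have := maxpath_edgeE ip jp; tauto.
split=> //; exists (fun i : 'I_#|T| => x i); split; first exact: maxpath_bijective.
move=> i j; have ip : i <= size p by rewrite -ltnS sizeT.
have jp : j <= size p by rewrite -ltnS sizeT.
rewrite !modn_succ ?ltn_ord //.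
case: (i.+1 =P #|T|) => hi; case: (j.+1 =P #|T|) => hj.
all: by apply/idP/idP => [/(edgeE _ _ ip jp) | h]; last apply/(edgeE _ _ ip jp); lia.
Qed.

End MaximalPath.

Lemma deg2_path_or_cycle (T : finType) (e : rel T) :
  symmetric e -> irreflexive e -> connected_graph e ->
  degree_le2 e -> 2 < #|T| -> is_path_graph e #|T| \/ is_cycle_graph e #|T|.
Proof.
move=> esym eirr conn deg2 T3.
have [/existsP[s /forallP s_leaf] | /existsPn no_leaf] :=
  boolP [exists s, [forall v, [forall w, e s v ==> e s w ==> (v == w)]]].
  have [p [s_p s_p_uniq p_max]] := maximal_path_from e s.
  left; apply: (maximal_path_is_path_graph esym eirr conn deg2 s_p s_p_uniq p_max) => // v w.
  by move: (s_leaf v) => /forallP/(_ w); do 2 move=> /implyP/[apply]; move/eqP.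
case/card_gt0P: (ltnW (ltnW T3)) => s _.
have [p [s_p s_p_uniq p_max]] := maximal_path_from e s.
right; apply: (maximal_path_is_cycle_graph esym eirr conn deg2 s_p s_p_uniq p_max) => // v.
have /forallPn[a /forallPn[b]] := no_leaf v.
by rewrite !negb_imply => /and3P[eva evb nab]; exists a, b.
Qed.

Lemma res_wt_3_of_pair_resolving (T : finType) (e : rel T) (v : T) :
  symmetric e -> irreflexive e -> connected_graph e ->
  pair_resolving e -> has_two_nbrs e v -> res_wt_is e 3.
Proof.
move=> esym eirr conn res v2; split=> //; split; first exact/all_3_sets_wtrP.
move=> r /andP[r_gt0 r_lt3]; case: r r_gt0 r_lt3 => [|[|[|//]]] // _ _.
- by case: v2 => a [b [nab _ _]]; apply: not_all_1_sets_wtr; apply/card_gt1P; exists a, b.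
- exact: not_all_2_sets_wtr v2.
Qed.

Theorem theorem6 (T : finType) (e : rel T) :
  simple_graph e -> connected_graph e ->
  (res_wt_is e 3 <->
   (exists n, odd n /\ is_cycle_graph e n) \/
   (exists n, 3 <= n /\ is_path_graph e n)).
Proof.
move=> [esym eirr] conn; split.
- case=> _ [all3 min3].
  have T3 : 2 < #|T|.
    rewrite ltnNge; apply/negP => T2.
    by apply: (min3 2) => //; apply: all_r_sets_wtr_ge_card.
  have res : pair_resolving e by apply/all_3_sets_wtrP.
  have deg2 := pair_resolving_degree_le2 esym eirr conn res.
  case: (deg2_path_or_cycle esym eirr conn deg2 T3) => [path_T | cycle_T].
    by right; exists #|T|.
  left; exists #|T|; split=> //; apply: contraT => even_T.
  by case: (even_cycle_not_pair_resolving even_T cycle_T res).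
- case=> [[n [odd_n cycle_n]] | [n [n3 path_n]]].
  + have [v v2] := cycle_graph_has_two_nbrs cycle_n.
    exact: res_wt_3_of_pair_resolving esym eirr conn (odd_cycle_pair_resolving odd_n cycle_n) v2.
  + have [v v2] := path_graph_has_two_nbrs n3 path_n.
    exact: res_wt_3_of_pair_resolving esym eirr conn (path_graph_pair_resolving path_n) v2.
Qed.
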